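(* Let $\mathbb{F}$ be a field, $d\geq3$ and $V$ a vector space over $\mathbb{F}$ of dimension $d+1$. Let $E^*_0,\dots,E^*_d$ be a system of mutually orthogonal idempotents in $\mathrm{End}(V)$ and $A\in\mathrm{End}(V)$ with $E^*_iAE^*_j=0$ if $|i-j|>1$ and $E^*_iAE^*_j\neq0$ if $|i-j|=1$. Assume $A$ is multiplicity-free and bipartite with primitive idempotents $E_0,\dots,E_d$ and eigenvalues $\theta_0,\dots,\theta_d$. Let $\theta^*_0,\dots,\theta^*_d\in\mathbb{F}$ be mutually distinct and $A^*=\sum_i\theta^*_iE^*_i$. Assume $E_0$ is normalizing and that in $\Delta$ the vertex $E_0$ is adjacent to $E_1$ and no other vertex. Then for $1\le i\le d-1$, $$\theta_0\frac{\theta^*_{i-1}-\theta^*_1}{\theta^*_i-\theta^*_0}\neq\theta_1\qquad\text{and}\qquad\theta_0\frac{\theta^*_{i+1}-\theta^*_1}{\theta^*_i-\theta^*_0}\neq\theta_1.$$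
   Context: A system of mutually orthogonal idempotents: $E^*_iE^*_j=\delta_{ij}E^*_i$, $\operatorname{rank}E^*_i=1$. $A$ multiplicity-free: $d+1$ distinct eigenvalues in $\mathbb{F}$; $E_i$ is the projection onto the $\theta_i$-eigenspace along the other eigenspaces. Bipartite: $\operatorname{tr}(E^*_iA)=0$ for all $i$. $\Delta$: graph on $E_0,\dots,E_d$ with $E_i\neq E_j$ adjacent iff $E_iA^*E_j\neq0$. The matrix $Y$ representing $A$ w.r.t. a basis $v_0,\dots,v_d$ satisfies $Av_j=\sum_iY_{ij}v_i$. An eigenvalue $\theta$ is normalizing if some basis with $v_i\in E^*_iV$ makes every row sum of the matrix representing $A$ equal to $\theta$; $E_i$ is normalizing if $\theta_i$ is. *)

From HB Require Import structures.
From mathcomp Require Import all_boot all_order all_algebra.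
Set Implicit Arguments. Unset Strict Implicit. Unset Printing Implicit Defensive.
Import Order.TTheory GRing.Theory Num.Theory.
Local Open Scope ring_scope.

(* V = F^(d+1) as column vectors; End(V) = 'M[F]_(d.+1), acting by M *m v. *)

Definition orth_idempotent_system (F : fieldType) (d : nat)
  (Es : 'I_d.+1 -> 'M[F]_d.+1) : Prop :=
  (forall i j, Es i *m Es j = if i == j then Es i else 0) /\
  (forall i, \rank (Es i) = 1%N).

(* A is multiplicity-free with eigenvalues th_0..th_d (distinct) and E_i the
   primitive idempotents: E_i is the projection onto the th_i-eigenspace
   along the other eigenspaces.  Equivalently (standard spectral data):
   the E_i are nonzero, mutually orthogonal idempotents summing to I, with
   A E_i = E_i A = th_i E_i. *)
Definition primitive_idempotents (F : fieldType) (d : nat)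
  (A : 'M[F]_d.+1) (th : 'I_d.+1 -> F) (E : 'I_d.+1 -> 'M[F]_d.+1) : Prop :=
  injective th /\
  (forall i, E i != 0) /\
  (forall i j, E i *m E j = if i == j then E i else 0) /\
  (\sum_i E i = 1%:M) /\
  (forall i, A *m E i = th i *: E i) /\
  (forall i, E i *m A = th i *: E i).

Definition bipartite (F : fieldType) (d : nat)
  (Es : 'I_d.+1 -> 'M[F]_d.+1) (A : 'M[F]_d.+1) : Prop :=
  forall i, \tr (Es i *m A) = 0.

(* theta is normalizing: there is a basis v_0..v_d (the columns of an
   invertible P) with v_j \in E^*_j V, such that the matrix Y representing A
   (A v_j = sum_i Y_ij v_i, i.e. A P = P Y) has every row sum equal to theta. *)
Definition normalizing (F : fieldType) (d : nat)
  (Es : 'I_d.+1 -> 'M[F]_d.+1) (A : 'M[F]_d.+1) (theta : F) : Prop :=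
  exists (P Y : 'M[F]_d.+1),
    [/\ P \in unitmx,
        (forall j, Es j *m col j P = col j P),
        A *m P = P *m Y &
        (forall i, \sum_j Y i j = theta)].

Definition Delta_adj (F : fieldType) (d : nat)
  (E : 'I_d.+1 -> 'M[F]_d.+1) (Astar : 'M[F]_d.+1) (i j : 'I_d.+1) : bool :=
  (i != j) && (E i *m Astar *m E j != 0).

From HB Require Import structures.
From mathcomp Require Import all_boot all_order all_algebra.
From mathcomp Require Import ring zify.
Set Implicit Arguments. Unset Strict Implicit. Unset Printing Implicit Defensive.
Import Order.TTheory GRing.Theory Num.Theory.
Local Open Scope ring_scope.

(* In the normalizing basis A is represented by a tridiagonal Y with zero
   diagonal and nonzero off-diagonal entries.  A row g of E_0 P is a left
   theta_0-eigenvector of Y with g_0 <> 0.  As E_0 A^* = E_0 A^* E_0 +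
   E_0 A^* E_1, the vector (g_k theta^*_k)_k is a theta_0-eigenvector,
   necessarily c g, plus a theta_1-eigenvector; so g and
   u_k := g_k (theta^*_k - c) are left eigenvectors for theta_0 and theta_1.
   Column 0 of both eigen-equations gives
   theta_0 (theta^*_1 - c) = theta_1 (theta^*_0 - c), and column i gives
   g_(i-1) Y_(i-1,i) (theta^*_(i-1) - theta^*_(i+1)) =
     g_i (theta_1 (theta^*_i - c) - theta_0 (theta^*_(i+1) - c))
   and its mirror image.  All g_k are nonzero, so neither side vanishes;
   substituting the column-0 relation, this is exactly the two inequalities. *)

Definition bipartite_tridiagonal (F : fieldType) (d : nat) (Y : 'M[F]_d.+1) :=
  (forall k j : 'I_d.+1, ~~ ((k.+1 == j) || (j.+1 == k))%N -> Y k j = 0) /\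
  (forall k j : 'I_d.+1, ((k.+1 == j) || (j.+1 == k))%N -> Y k j != 0).

Definition left_eigenfun (F : fieldType) (d : nat) (Y : 'M[F]_d.+1) (th : F)
    (h : 'I_d.+1 -> F) :=
  forall j, \sum_k h k * Y k j = th * h j.

Lemma inord0 (d : nat) : inord 0 = ord0 :> 'I_d.+1.
Proof. by apply: val_inj; rewrite /= inordK. Qed.

Lemma inord_overflow (d k : nat) : (d < k)%N -> @inord d k = ord0.
Proof. by move=> dk; apply: val_inj; rewrite /= /inord val_insubd ltnS leqNgt dk. Qed.

Lemma inord_pred_neq_succ (d : nat) (j : 'I_d.+1) :
  (2 <= d)%N -> @inord d j.-1 != inord j.+1.
Proof.
move=> d2; apply/eqP => /(congr1 val) /=.
have jd := ltn_ord j.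
rewrite inordK; last by rewrite (leq_ltn_trans (leq_pred _)).
have [jSd|dj] := ltnP j.+1 d.+1; first by rewrite inordK //; lia.
by rewrite inord_overflow //=; lia.
Qed.

Lemma row_left_eigenfun (F : fieldType) (d : nat) (M Y : 'M[F]_d.+1) (th : F) r :
  M *m Y = th *: M -> left_eigenfun Y th (fun k => M r k).
Proof. by move=> MY j; have /matrixP/(_ r j) := MY; rewrite !mxE. Qed.

Lemma eq_left_eigenfun (F : fieldType) (d : nat) (Y : 'M[F]_d.+1) (th : F)
    (h1 h2 : 'I_d.+1 -> F) :
  h1 =1 h2 -> left_eigenfun Y th h1 -> left_eigenfun Y th h2.
Proof. by move=> e12 e1 j; rewrite -e12 -(e1 j); apply: eq_bigr => k _; rewrite e12. Qed.

Section Tridiagonal.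

Variables (F : fieldType) (d : nat) (Y : 'M[F]_d.+1).
Hypotheses (d2 : (2 <= d)%N) (tY : bipartite_tridiagonal Y).

(* At the ends inord j.-1 resp. inord j.+1 fall back to ord0, where the
   corresponding entry of Y vanishes. *)
Lemma tridiagonal_col_sum (h : 'I_d.+1 -> F) (j : 'I_d.+1) :
  \sum_k h k * Y k j =
    h (inord j.-1) * Y (inord j.-1) j + h (inord j.+1) * Y (inord j.+1) j.
Proof.
have [Y0 _] := tY.
rewrite (bigD1 (inord j.-1)) //= (bigD1 (inord j.+1)) /=;
  last by rewrite eq_sym inord_pred_neq_succ.
rewrite big1 ?addr0 // => k /andP [k1 k2]; rewrite Y0 ?mulr0 //.
apply/negP => /orP [/eqP e|/eqP e].
  by move/eqP: k1; apply; apply: val_inj; rewrite /= -e /= inordK // ltnS leqnSn.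
by move/eqP: k2; apply; apply: val_inj; rewrite /= -e /= inordK // e ltn_ord.
Qed.

Lemma tridiagonal_next_eq0 (h : 'I_d.+1 -> F) (th : F) (j : 'I_d.+1) :
  (j.+1 < d.+1)%N -> \sum_k h k * Y k j = th * h j ->
  h j = 0 -> h (inord j.-1) = 0 -> h (inord j.+1) = 0.
Proof.
move=> jd; rewrite tridiagonal_col_sum => + hj hj' => /eqP.
rewrite hj hj' mul0r add0r mulr0 mulf_eq0 => /orP [/eqP //|].
by rewrite (negbTE (tY.2 _ _ _)) // inordK //; lia.
Qed.

Lemma left_eigenfun_eq0 (th : F) (h : 'I_d.+1 -> F) :
  left_eigenfun Y th h -> h ord0 = 0 -> forall k, h k = 0.
Proof.
move=> eh h0.
suff H n : h (inord n) = 0 /\ h (inord n.+1) = 0.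
  by move=> k; rewrite -(inord_val k); case: (H k).
elim: n => [|n [IHn IHSn]].
  rewrite inord0 h0; split=> //.
  by apply: (@tridiagonal_next_eq0 h th ord0); rewrite /= ?inord0 //; lia.
split=> //; have [nd|dn] := ltnP n.+2 d.+1; last by rewrite inord_overflow.
have := @tridiagonal_next_eq0 h th (inord n.+1).
by rewrite inordK ?(ltnW nd) //=; apply.
Qed.

Lemma left_eigenfun_proportional (th : F) (h1 h2 : 'I_d.+1 -> F) :
  left_eigenfun Y th h1 -> left_eigenfun Y th h2 -> h2 ord0 != 0 ->
  forall k, h1 k = h1 ord0 / h2 ord0 * h2 k.
Proof.
move=> e1 e2 h20 k; apply/eqP; rewrite -subr_eq0; apply/eqP; move: k.
set c := h1 ord0 / h2 ord0.
apply: (@left_eigenfun_eq0 th); last by rewrite /c divfK // subrr.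
move=> j; under eq_bigr do rewrite mulrBl -mulrA.
by rewrite sumrB -mulr_sumr e1 e2; ring.
Qed.

Section EigenPair.

Variables (th0 th1 a : F) (t g : 'I_d.+1 -> F).
Hypotheses (t_inj : injective t) (eg : left_eigenfun Y th0 g) (g0 : g ord0 != 0).
Hypothesis eu : left_eigenfun Y th1 (fun k => g k * (t k - a)).

Lemma eigen_pair_col (j : 'I_d.+1) :
  g (inord j.-1) * Y (inord j.-1) j * (t (inord j.-1) - t (inord j.+1)) =
    th1 * (g j * (t j - a)) - (t (inord j.+1) - a) * (th0 * g j) /\
  g (inord j.+1) * Y (inord j.+1) j * (t (inord j.+1) - t (inord j.-1)) =
    th1 * (g j * (t j - a)) - (t (inord j.-1) - a) * (th0 * g j).
Proof. by rewrite -(eg j) -(eu j) !tridiagonal_col_sum; split; ring. Qed.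

Lemma eigen_pair_col0 : th0 * (t (inord 1) - a) = th1 * (t ord0 - a).
Proof.
have Y00 : Y ord0 ord0 = 0 by apply: tY.1; rewrite /=.
have e0 := eg ord0; have e1 := eu ord0.
rewrite tridiagonal_col_sum /= inord0 Y00 mulr0 add0r in e0.
rewrite tridiagonal_col_sum /= inord0 Y00 mulr0 add0r in e1.
apply: (mulfI g0).
transitivity (th0 * g ord0 * (t (inord 1) - a)); first ring.
rewrite -e0; transitivity (g (inord 1) * (t (inord 1) - a) * Y (inord 1) ord0).
  by ring.
by rewrite e1; ring.
Qed.

Lemma sub_pred_succ_neq0 (j : 'I_d.+1) : t (inord j.-1) - t (inord j.+1) != 0.
Proof. by rewrite subr_eq0 (inj_eq t_inj) inord_pred_neq_succ. Qed.

(* A zero g_n would force g_(n-1) = 0 through the first identity of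
   eigen_pair_col at n, and so on down to g_0. *)
Lemma eigen_pair_neq0 (k : 'I_d.+1) : g k != 0.
Proof.
rewrite -(inord_val k); elim: (nat_of_ord k) (ltn_ord k) => [|n IHn] nd.
  by rewrite inord0.
apply/eqP => gn.
have [col _] := eigen_pair_col (inord n.+1).
move: col; rewrite inordK //= gn mul0r !mulr0 subrr => /eqP.
have := sub_pred_succ_neq0 (inord n.+1); rewrite inordK //= => tn.
rewrite mulf_eq0 (negbTE tn) orbF mulf_eq0 (negbTE (IHn (ltnW nd))) /=.
by rewrite (negbTE (tY.2 _ _ _)) //= !inordK //; lia.
Qed.

Lemma eigen_pair_ratio_neq (i : 'I_d.+1) : (1 <= i <= d.-1)%N ->
  th0 * ((t (inord i.-1) - t (inord 1)) / (t i - t ord0)) != th1 /\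
  th0 * ((t (inord i.+1) - t (inord 1)) / (t i - t ord0)) != th1.
Proof.
move=> /andP [i1 id].
have ti0 : t i - t ord0 != 0.
  by rewrite subr_eq0 (inj_eq t_inj); apply/eqP => /(congr1 val) /=; lia.
have nbr_neq0 k : (k == i.-1)%N || (k == i.+1)%N -> g (inord k) * Y (inord k) i != 0.
  move=> /orP [] /eqP ->; rewrite mulf_neq0 ?eigen_pair_neq0 //;
    by apply: tY.2; rewrite inordK //=; lia.
have rel (s : nat) : th0 * ((t (inord s) - t (inord 1)) / (t i - t ord0)) = th1 ->
    th1 * (g i * (t i - a)) - (t (inord s) - a) * (th0 * g i) = 0.
  move=> /(congr1 (fun x => x * (t i - t ord0))); rewrite -mulrA divfK // => E.
  transitivity (g i * (th1 * (t i - t ord0) - th0 * (t (inord s) - t (inord 1)))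
      + g i * (th1 * (t ord0 - a) - th0 * (t (inord 1) - a))); first by ring.
  by rewrite E eigen_pair_col0 !subrr !mulr0 addr0.
have [col_pred col_succ] := eigen_pair_col i.
split; apply/negP => /eqP /rel; apply/eqP.
- by rewrite -col_succ mulf_neq0 ?nbr_neq0 ?eqxx ?orbT // -opprB oppr_eq0 sub_pred_succ_neq0.
- by rewrite -col_pred mulf_neq0 ?nbr_neq0 ?eqxx ?sub_pred_succ_neq0.
Qed.

End EigenPair.

End Tridiagonal.

Section NormalizingBasis.

Variables (F : fieldType) (d : nat) (Es : 'I_d.+1 -> 'M[F]_d.+1).
Variables (A P Y : 'M[F]_d.+1).

Lemma orth_idempotents_mulmx :
  (forall i j, Es i *m Es j = if i == j then Es i else 0) ->
  (forall j, Es j *m col j P = col j P) ->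
  forall i, Es i *m P = P *m delta_mx i i.
Proof.
move=> Es_orth Es_col i.
have Pcol j : P *m delta_mx j j = col j P *m delta_mx 0 j.
  by rewrite colE -mulmxA mul_delta_mx.
rewrite -[in LHS](mulmx1 P) mx1_sum_delta !mulmx_sumr (bigD1 i) //= big1 ?addr0.
  by rewrite Pcol mulmxA Es_col -Pcol.
move=> j ji; rewrite Pcol mulmxA -Es_col mulmxA Es_orth eq_sym (negbTE ji).
by rewrite !mul0mx.
Qed.

Hypotheses (Pu : P \in unitmx) (EsP : forall i, Es i *m P = P *m delta_mx i i).
Hypothesis APY : A *m P = P *m Y.

Lemma delta_mx_sandwich (i j : 'I_d.+1) :
  delta_mx i i *m Y *m delta_mx j j = Y i j *: delta_mx i j.
Proof.
rewrite -(mul_delta_mx (0 : 'I_1) i i) -(mul_delta_mx (0 : 'I_1) j j).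
rewrite !mulmxA -(mulmxA (delta_mx i 0)) -rowE -(mulmxA _ _ (delta_mx j 0)) -colE.
by rewrite [col j (row i Y)]mx11_scalar !mxE mul_mx_scalar -scalemxAl mul_delta_mx.
Qed.

Lemma idempotent_block_mulmx (i j : 'I_d.+1) :
  Es i *m A *m Es j *m P = Y i j *: (P *m delta_mx i j).
Proof.
rewrite -mulmxA EsP mulmxA -(mulmxA (Es i)) APY mulmxA EsP.
by rewrite -!mulmxA (mulmxA (delta_mx i i)) delta_mx_sandwich scalemxAr.
Qed.

Lemma mxtrace_idempotent_mul (k : 'I_d.+1) : \tr (Es k *m A) = Y k k.
Proof.
have -> : Es k *m A = P *m (delta_mx k k *m Y *m invmx P).
  by rewrite -[Es k *m A](mulmxK Pu) -(mulmxA (Es k) A P) APY mulmxA EsP !mulmxA.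
rewrite mxtrace_mulC mulmxKV // -{1}(mul_delta_mx k k k) -mulmxA mxtrace_mulC.
rewrite delta_mx_sandwich mxtraceZ /mxtrace.
rewrite (bigD1 k) //= mxE !eqxx big1 ?addr0 ?mulr1 // => l lk.
by rewrite mxE (negbTE lk).
Qed.

Lemma normalizing_bipartite_tridiagonal :
  (forall i j : 'I_d.+1, ((i.+1 < j) || (j.+1 < i))%N -> Es i *m A *m Es j = 0) ->
  (forall i j : 'I_d.+1, ((i.+1 == j) || (j.+1 == i))%N -> Es i *m A *m Es j != 0) ->
  bipartite Es A -> bipartite_tridiagonal Y.
Proof.
move=> Afar Anear bip; split=> [k j kj | k j kj].
  have [<-|kj'] := eqVneq k j; first by rewrite -mxtrace_idempotent_mul bip.
  apply/eqP; apply: contraT => Ykj.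
  have : P *m delta_mx k j = 0.
    apply: (scalerI Ykj); rewrite scaler0 -idempotent_block_mulmx Afar ?mul0mx //.
    by move: kj kj'; rewrite -(inj_eq val_inj) /=; lia.
  move/(congr1 (mulmx (invmx P))); rewrite mulKmx // mulmx0.
  by move/matrixP/(_ k j)/eqP; rewrite !mxE !eqxx oner_eq0.
apply: contra (Anear k j kj) => /eqP Y0.
by rewrite -(mulmxK Pu (Es k *m A *m Es j)) idempotent_block_mulmx Y0 scale0r !mul0mx.
Qed.

Lemma sum_idempotents_mulmx (t : 'I_d.+1 -> F) :
  (\sum_i t i *: Es i) *m P = P *m diag_mx (\row_i t i).
Proof.
rewrite mulmx_suml diag_mx_sum_delta mulmx_sumr; apply: eq_bigr => i _.
by rewrite -scalemxAl EsP mxE -scalemxAr.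
Qed.

End NormalizingBasis.

Section SpectralSplit.

Variables (F : fieldType) (d : nat) (A P Y E0 E1 Astar : 'M[F]_d.+1).
Variables (th0 th1 : F) (t : 'I_d.+1 -> F).
Hypotheses (d2 : (2 <= d)%N) (tY : bipartite_tridiagonal Y).
Hypotheses (Pu : P \in unitmx) (APY : A *m P = P *m Y).
Hypotheses (E0A : E0 *m A = th0 *: E0) (E1A : E1 *m A = th1 *: E1) (E0_neq0 : E0 != 0).
Hypothesis AstarP : Astar *m P = P *m diag_mx (\row_i t i).
Hypothesis E0Astar : E0 *m Astar = E0 *m Astar *m E0 + E0 *m Astar *m E1.

Lemma left_eigen_basis_change (M : 'M[F]_d.+1) (th : F) :
  M *m A = th *: M -> M *m P *m Y = th *: (M *m P).
Proof. by move=> MA; rewrite -mulmxA -APY mulmxA MA -scalemxAl. Qed.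

Lemma left_eigen_sandwich (M E : 'M[F]_d.+1) (th : F) :
  E *m A = th *: E -> M *m E *m P *m Y = th *: (M *m E *m P).
Proof. by move=> EA; apply: left_eigen_basis_change; rewrite -mulmxA EA scalemxAr. Qed.

Lemma spectral_split_eigen_pair : exists (g : 'I_d.+1 -> F) (a : F),
  [/\ left_eigenfun Y th0 g, g ord0 != 0 &
      left_eigenfun Y th1 (fun k => g k * (t k - a))].
Proof.
have [r [k Grk]] : exists r k, (E0 *m P) r k != 0.
  apply/matrix0Pn; apply: contra E0_neq0 => /eqP E0P0.
  by rewrite -(mulmxK Pu E0) E0P0 mul0mx.
pose g k := (E0 *m P) r k.
have eg : left_eigenfun Y th0 g.
  by apply: row_left_eigenfun; apply: left_eigen_basis_change.
have g0 : g ord0 != 0.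
  by apply: contra Grk => /eqP g0; rewrite -/(g k) (left_eigenfun_eq0 d2 tY eg g0).
pose H0 := E0 *m Astar *m E0 *m P; pose H1 := E0 *m Astar *m E1 *m P.
have eH0 : left_eigenfun Y th0 (fun k => H0 r k).
  by apply: row_left_eigenfun; apply: left_eigen_sandwich.
have eH1 : left_eigenfun Y th1 (fun k => H1 r k).
  by apply: row_left_eigenfun; apply: left_eigen_sandwich.
have gt_split l : g l * t l = H0 r l + H1 r l.
  have : E0 *m P *m diag_mx (\row_i t i) = H0 + H1.
    by rewrite -mulmxA -AstarP mulmxA E0Astar mulmxDl.
  by move/matrixP/(_ r l); rewrite mul_mx_diag mxE [(\row_i _) _ _]mxE [(H0 + H1) r l]mxE.
exists g, (H0 r ord0 / g ord0); split=> //.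
apply: eq_left_eigenfun eH1 => l.
have /= H0l := left_eigenfun_proportional d2 tY eH0 eg g0 l.
by rewrite mulrBr gt_split H0l; ring.
Qed.

End SpectralSplit.

Theorem lemma7p7 (F : fieldType) (d : nat) (Es : 'I_d.+1 -> 'M[F]_d.+1)
  (A : 'M[F]_d.+1) (E : 'I_d.+1 -> 'M[F]_d.+1) (th ths : 'I_d.+1 -> F) :
  (3 <= d)%N ->
  orth_idempotent_system Es ->
  (forall i j : 'I_d.+1, ((i.+1 < j) || (j.+1 < i))%N -> Es i *m A *m Es j = 0) ->
  (forall i j : 'I_d.+1, ((i.+1 == j) || (j.+1 == i))%N -> Es i *m A *m Es j != 0) ->
  primitive_idempotents A th E ->
  bipartite Es A ->
  injective ths ->
  let Astar := \sum_i ths i *: Es i in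
  normalizing Es A (th ord0) ->
  Delta_adj E Astar ord0 (inord 1) ->
  (forall j : 'I_d.+1, j != inord 1 -> ~~ Delta_adj E Astar ord0 j) ->
  forall i : 'I_d.+1, (1 <= i <= d.-1)%N ->
    th ord0 * ((ths (inord i.-1) - ths (inord 1)) / (ths i - ths ord0)) != th (inord 1) /\
    th ord0 * ((ths (inord i.+1) - ths (inord 1)) / (ths i - ths ord0)) != th (inord 1).
Proof.
move=> d3 [Es_orth _] Afar Anear [_ [E_neq0 [_ [E_sum [_ EA]]]]] bip ths_inj Astar
  [P [Y [Pu Es_col APY _]]] _ not_adj.
have d2 : (2 <= d)%N by apply: ltnW.
have EsP := orth_idempotents_mulmx Es_orth Es_col.
have tY := normalizing_bipartite_tridiagonal Pu EsP APY Afar Anear bip.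
have inord1_neq0 : inord 1 != ord0 :> 'I_d.+1.
  by apply/eqP => /(congr1 val); rewrite /= inordK //; lia.
have E0Astar : E ord0 *m Astar =
    E ord0 *m Astar *m E ord0 + E ord0 *m Astar *m E (inord 1).
  rewrite -{1}[E ord0 *m Astar]mulmx1 -E_sum mulmx_sumr (bigD1 ord0) //=.
  rewrite (bigD1 (inord 1)) //= big1 ?addr0 // => j /andP [j0 j1].
  by have := not_adj j j1; rewrite /Delta_adj eq_sym j0 negbK => /eqP.
have [g [a [eg g0 eu]]] := spectral_split_eigen_pair d2 tY Pu APY (EA _) (EA _)
  (E_neq0 _) (sum_idempotents_mulmx EsP ths) E0Astar.
move=> i; exact: (eigen_pair_ratio_neq d2 tY ths_inj eg g0 eu).
Qed.
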